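(* Let $S$ be a group or a 0-group. Then a right $S$-act $A_S$ is Rees artinian if and only if it is Rees noetherian.
   Context: A 0-group is a group with an externally adjoined zero element. An $S$-act is Rees artinian (Rees noetherian) if its subacts satisfy the descending (ascending) chain condition. *)

Definition is_group (S : Type) (mul : S -> S -> S) : Prop :=
  (forall x y z, mul x (mul y z) = mul (mul x y) z) /\
  exists e : S,
    (forall x, mul e x = x /\ mul x e = x) /\
    (forall x, exists y, mul x y = e /\ mul y x = e).

(* (S, mul) is a 0-group: a group G with an externally adjoined zero z,
   i.e. S = G ∪ {z}, z ∉ G, G is a group under mul, z is a two-sided zero. *)
Definition is_0group (S : Type) (mul : S -> S -> S) : Prop :=
  (forall x y z, mul x (mul y z) = mul (mul x y) z) /\
  exists z : S,
    (forall x, mul z x = z /\ mul x z = z) /\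
    (forall x y, x <> z -> y <> z -> mul x y <> z) /\
    exists e : S, e <> z /\
      (forall x, mul e x = x /\ mul x e = x) /\
      (forall x, x <> z -> exists y, y <> z /\ mul x y = e /\ mul y x = e).

Definition is_right_act (S A : Type) (mul : S -> S -> S) (act : A -> S -> A) : Prop :=
  forall a s t, act (act a s) t = act a (mul s t).

Definition is_subact (S A : Type) (act : A -> S -> A) (B : A -> Prop) : Prop :=
  forall a s, B a -> B (act a s).

Definition set_sub (A : Type) (B C : A -> Prop) : Prop := forall a, B a -> C a.
Definition set_eq (A : Type) (B C : A -> Prop) : Prop := forall a, B a <-> C a.

Definition rees_artinian (S A : Type) (act : A -> S -> A) : Prop :=
  forall B : nat -> A -> Prop,
    (forall n, is_subact S A act (B n)) ->
    (forall n, set_sub A (B (Datatypes.S n)) (B n)) ->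
    exists n, forall m, n <= m -> set_eq A (B m) (B n).

Definition rees_noetherian (S A : Type) (act : A -> S -> A) : Prop :=
  forall B : nat -> A -> Prop,
    (forall n, is_subact S A act (B n)) ->
    (forall n, set_sub A (B n) (B (Datatypes.S n))) ->
    exists n, forall m, n <= m -> set_eq A (B m) (B n).

From Stdlib Require Import Classical Lia List.
Import ListNotations.

(* The idea is an order-reversing duality on subacts.  Call a finite family
   of operators on subsets of A separating if the operators map subacts to
   subacts, reverse inclusion, and their values on a subact P determine P.
   Such a family turns an ascending chain of subacts into finitely many
   descending chains and vice versa; once these stabilize, so does the
   original chain.  Hence ACC and DCC coincide whenever a separating family
   exists (artinian_iff_noetherian_of_separating).

   Off A·S a subact is arbitrary and is
   recorded by its complement (outside_image).  On A·S every element is fixed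
   by the identity, so a subact is a union of orbits x·S: over a group these
   orbits are recorded by the elements whose orbit misses P (avoiding); over
   a 0-group the orbit x·S splits into the group orbit and the fixed point
   x·z, recorded by meets_only_at_zero and zero_point_outside. *)

Section ChainConditions.
Variables (S A : Type) (act : A -> S -> A).

Definition eventually_constant (B : nat -> A -> Prop) : Prop :=
  exists n, forall m, n <= m -> set_eq A (B m) (B n).

Lemma constant_from_later (B : nat -> A -> Prop) n N :
  (forall m, n <= m -> set_eq A (B m) (B n)) -> n <= N ->
  forall m, N <= m -> set_eq A (B m) (B N).
Proof.
  intros Hn HnN m HNm a.
  rewrite (Hn m ltac:(lia) a), (Hn N HnN a). tauto.
Qed.

Lemma eventually_constant_simultaneously (Bs : list (nat -> A -> Prop)) :
  (forall B, In B Bs -> eventually_constant B) ->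
  exists N, forall B, In B Bs -> forall m, N <= m -> set_eq A (B m) (B N).
Proof.
  induction Bs as [|B0 Bs IH]; intros Hall.
  - exists 0. intros B [].
  - destruct (Hall B0 (or_introl eq_refl)) as [n0 H0].
    destruct IH as [N HN]; [intros B HB; apply Hall; now right|].
    exists (Nat.max n0 N). intros B [<-|HB].
    + apply (constant_from_later B0 n0); [exact H0|lia].
    + apply (constant_from_later B N); [exact (HN B HB)|lia].
Qed.

Definition preserves_subacts (F : (A -> Prop) -> A -> Prop) : Prop :=
  forall P, is_subact S A act P -> is_subact S A act (F P).

Definition antitone (F : (A -> Prop) -> A -> Prop) : Prop :=
  forall P Q, set_sub A P Q -> set_sub A (F Q) (F P).

Definition separating (Fs : list ((A -> Prop) -> A -> Prop)) : Prop :=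
  forall P Q, is_subact S A act P -> is_subact S A act Q ->
  (forall F, In F Fs -> set_eq A (F P) (F Q)) -> set_sub A P Q.

Lemma separating_stabilizes Fs (B : nat -> A -> Prop) :
  separating Fs -> (forall n, is_subact S A act (B n)) ->
  (forall F, In F Fs -> eventually_constant (fun n => F (B n))) ->
  eventually_constant B.
Proof.
  intros Hsep Hsub Hstab.
  destruct (eventually_constant_simultaneously
              (map (fun F n => F (B n)) Fs)) as [N HN].
  { intros C HC. apply in_map_iff in HC as [F [<- HF]]. exact (Hstab F HF). }
  exists N. intros m Hm a.
  assert (Heq : forall F, In F Fs -> set_eq A (F (B m)) (F (B N))).
  { intros F HF. exact (HN (fun n => F (B n)) (in_map _ _ _ HF) m Hm). }
  split; apply Hsep; auto.
  intros F HF b. rewrite (Heq F HF b). tauto.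
Qed.

Theorem artinian_iff_noetherian_of_separating Fs :
  (forall F, In F Fs -> preserves_subacts F /\ antitone F) ->
  separating Fs ->
  (rees_artinian S A act <-> rees_noetherian S A act).
Proof.
  intros HFs Hsep. split; intros Hcc B Hsub Hchain;
    apply (separating_stabilizes Fs); auto; intros F HF;
    destruct (HFs F HF) as [Hpres Hanti];
    apply Hcc; intro n; first [apply Hpres, Hsub | apply Hanti, Hchain].
Qed.

End ChainConditions.

Section ImageOfAct.
Variables (S A : Type) (mul : S -> S -> S) (act : A -> S -> A).
Hypothesis Hact : is_right_act S A mul act.

Definition in_image (x : A) : Prop := exists b t, x = act b t.

(* Outside A·S a subact may be arbitrary: this operator records the
   complement of P there, and is a subact since A·S is. *)
Definition outside_image (P : A -> Prop) : A -> Prop :=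
  fun a => ~ P a \/ in_image a.

Lemma outside_image_subact P : is_subact S A act (outside_image P).
Proof. intros a t _. right. exists a, t. reflexivity. Qed.

Lemma outside_image_antitone : antitone A outside_image.
Proof.
  intros P Q HPQ a [Ha|Ha]; [left; intro; apply Ha, HPQ; assumption|now right].
Qed.

Lemma outside_image_separates P Q x :
  set_eq A (outside_image P) (outside_image Q) -> P x -> ~ in_image x -> Q x.
Proof.
  intros E Px Hx. apply NNPP. intro HQx.
  destruct (proj2 (E x) (or_introl HQx)); contradiction.
Qed.

Lemma right_unit_fixes_image e x :
  (forall t, mul t e = t) -> in_image x -> act x e = x.
Proof. intros He [b [t ->]]. rewrite Hact, He. reflexivity. Qed.

Lemma subact_reflects_invertible e (Q : A -> Prop) x s s' :
  (forall t, mul t e = t) -> is_subact S A act Q -> in_image x ->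
  mul s s' = e -> Q (act x s) -> Q x.
Proof.
  intros He HQ Hx Hss' Hq.
  rewrite <- (right_unit_fixes_image e x He Hx), <- Hss', <- Hact.
  apply HQ, Hq.
Qed.

End ImageOfAct.

Definition avoiding (S A : Type) (act : A -> S -> A) (P : A -> Prop) : A -> Prop :=
  fun a => forall s, ~ P (act a s).

Lemma avoiding_subact (S A : Type) (mul : S -> S -> S) (act : A -> S -> A) P :
  is_right_act S A mul act -> is_subact S A act (avoiding S A act P).
Proof. intros Hact a t Ha s. rewrite Hact. apply Ha. Qed.

Lemma avoiding_antitone (S A : Type) (act : A -> S -> A) :
  antitone A (avoiding S A act).
Proof. intros P Q HPQ a Ha s Hp. apply (Ha s), HPQ, Hp. Qed.

Lemma group_separating (S A : Type) (mul : S -> S -> S) (act : A -> S -> A) :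
  is_group S mul -> is_right_act S A mul act ->
  separating S A act [avoiding S A act; outside_image S A act].
Proof.
  intros [_ [e [He Hinv]]] Hact P Q HP HQ E x Px.
  assert (Hre : forall t, mul t e = t) by (intro t; apply He).
  destruct (classic (in_image S A act x)) as [Hx|Hx].
  - destruct (classic (exists s, Q (act x s))) as [[s Hs]|Hn].
    + destruct (Hinv s) as [s' [Hss' _]].
      exact (subact_reflects_invertible S A mul act Hact e Q x s s' Hre HQ Hx Hss' Hs).
    + assert (Hav : avoiding S A act Q x) by (intros s Hs; eauto).
      apply (E _ (or_introl eq_refl)) in Hav.
      exfalso. apply (Hav e).
      rewrite (right_unit_fixes_image S A mul act Hact e x Hre Hx). exact Px.
  - exact (outside_image_separates S A act P Q x
             (E _ (or_intror (or_introl eq_refl))) Px Hx).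
Qed.

Lemma group_artinian_iff_noetherian (S A : Type) (mul : S -> S -> S) (act : A -> S -> A) :
  is_group S mul -> is_right_act S A mul act ->
  (rees_artinian S A act <-> rees_noetherian S A act).
Proof.
  intros HG Hact.
  apply (artinian_iff_noetherian_of_separating S A act
           [avoiding S A act; outside_image S A act]);
    [|exact (group_separating S A mul act HG Hact)].
  intros F [<-|[<-|[]]]; split.
  - intros P _. exact (avoiding_subact S A mul act P Hact).
  - apply avoiding_antitone.
  - intros P _. apply outside_image_subact.
  - apply outside_image_antitone.
Qed.

Definition meets_only_at_zero (S A : Type) (act : A -> S -> A) (z : S)
  (P : A -> Prop) : A -> Prop :=
  fun a => forall s, P (act a s) -> act a s = act a z.

Definition zero_point_outside (S A : Type) (act : A -> S -> A) (z : S)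
  (P : A -> Prop) : A -> Prop :=
  fun a => ~ P (act a z).

Section ZeroGroupOperators.
Variables (S A : Type) (mul : S -> S -> S) (act : A -> S -> A) (z : S).
Hypothesis Hact : is_right_act S A mul act.
Hypothesis Hzero : forall t, mul t z = z.

Lemma meets_only_at_zero_subact P :
  is_subact S A act (meets_only_at_zero S A act z P).
Proof.
  intros a t Ha s Hs. rewrite !Hact in *. rewrite Hzero. apply Ha, Hs.
Qed.

Lemma meets_only_at_zero_antitone : antitone A (meets_only_at_zero S A act z).
Proof. intros P Q HPQ a Ha s Hp. apply Ha, HPQ, Hp. Qed.

Lemma zero_point_outside_subact P :
  is_subact S A act (zero_point_outside S A act z P).
Proof. intros a t Ha. unfold zero_point_outside. rewrite Hact, Hzero. exact Ha. Qed.

Lemma zero_point_outside_antitone : antitone A (zero_point_outside S A act z).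
Proof. intros P Q HPQ a Ha Hp. apply Ha, HPQ, Hp. Qed.

End ZeroGroupOperators.

(* Over a 0-group, the orbit of x in A·S is its group orbit together with
   the fixed point x·z; the three operators see these two parts and the
   trace outside A·S. *)
Lemma zero_group_separating (S A : Type) (mul : S -> S -> S) (act : A -> S -> A) z :
  (exists e, (forall x, mul x e = x) /\
     (forall x, x <> z -> exists y, mul x y = e)) ->
  is_right_act S A mul act ->
  separating S A act [meets_only_at_zero S A act z; outside_image S A act;
                      zero_point_outside S A act z].
Proof.
  intros [e [Hre Hinv]] Hact P Q HP HQ E x Px.
  destruct (classic (in_image S A act x)) as [Hx|Hx].
  - assert (Hxe : act x e = x) by exact (right_unit_fixes_image S A mul act Hact e x Hre Hx).
    destruct (classic (exists s, Q (act x s) /\ act x s <> act x z))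
      as [[s [Hs Hsz]]|Hn].
    + assert (Hs_z : s <> z) by (intros ->; contradiction).
      destruct (Hinv s Hs_z) as [s' Hss'].
      exact (subact_reflects_invertible S A mul act Hact e Q x s s' Hre HQ Hx Hss' Hs).
    + assert (Hm : meets_only_at_zero S A act z Q x).
      { intros s Hs. apply NNPP. intro. apply Hn. eauto. }
      apply (E _ (or_introl eq_refl)) in Hm.
      assert (Hxz : x = act x z).
      { rewrite <- Hxe at 1. apply Hm. rewrite Hxe. exact Px. }
      destruct (classic (Q (act x z))) as [Hq|Hq]; [rewrite Hxz; exact Hq|].
      apply (E _ (or_intror (or_intror (or_introl eq_refl)))) in Hq.
      exfalso. apply Hq. rewrite <- Hxz. exact Px.
  - exact (outside_image_separates S A act P Q x
             (E _ (or_intror (or_introl eq_refl))) Px Hx).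
Qed.

Lemma zero_group_artinian_iff_noetherian (S A : Type) (mul : S -> S -> S)
  (act : A -> S -> A) :
  is_0group S mul -> is_right_act S A mul act ->
  (rees_artinian S A act <-> rees_noetherian S A act).
Proof.
  intros [_ [z [Hz [_ [e [_ [He Hinv]]]]]]] Hact.
  assert (Hzero : forall t, mul t z = z) by (intro t; apply Hz).
  apply (artinian_iff_noetherian_of_separating S A act
           [meets_only_at_zero S A act z; outside_image S A act;
            zero_point_outside S A act z]).
  - intros F [<-|[<-|[<-|[]]]]; split; try intros P _.
    + exact (meets_only_at_zero_subact S A mul act z Hact Hzero P).
    + apply meets_only_at_zero_antitone.
    + apply outside_image_subact.
    + apply outside_image_antitone.
    + exact (zero_point_outside_subact S A mul act z Hact Hzero P).
    + apply zero_point_outside_antitone.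
  - apply (zero_group_separating S A mul act z); [|exact Hact].
    exists e. split; [intro x; apply He|].
    intros x Hx. destruct (Hinv x Hx) as [y [_ [Hxy _]]]. eauto.
Qed.

Theorem mainTheorem15 (S A : Type) (mul : S -> S -> S) (act : A -> S -> A) :
  (is_group S mul \/ is_0group S mul) ->
  is_right_act S A mul act ->
  (rees_artinian S A act <-> rees_noetherian S A act).
Proof.
  intros [HG|HG] Hact.
  - exact (group_artinian_iff_noetherian S A mul act HG Hact).
  - exact (zero_group_artinian_iff_noetherian S A mul act HG Hact).
Qed.
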